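(* Let $A \in\mathbb{C}^{n\times n}$, and fix $A^-\in A\{1\}$ and $A^{GD}\in A\{GD\}$. Then $A^{1GD}=A^-AA^{GD}$ is the unique matrix $X\in\mathbb{C}^{n\times n}$ satisfying $$AX = P_{R(A),N(AA^{GD})} \quad\text{and}\quad R(X)\subseteq R(A^{-}A).$$
   Context: For $A\in\mathbb{C}^{n\times n}$, $ind(A)$ is the smallest nonnegative integer $k$ with $\mathrm{rank}(A^k)=\mathrm{rank}(A^{k+1})$. $A\{1\}$ is the set of matrices $X$ with $AXA=A$. With $k=ind(A)$, $A\{GD\}$ is the set of G-Drazin inverses of $A$: matrices $X$ with $AXA=A$, $XA^{k+1}=A^k$, $A^{k+1}X=A^k$. $R(\cdot)$, $N(\cdot)$ denote range and null space; $P_{S,T}$ is the projector onto $S$ along $T$. *)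

From HB Require Import structures.
From mathcomp Require Import all_boot all_order all_algebra.
Set Implicit Arguments. Unset Strict Implicit. Unset Printing Implicit Defensive.
Import Order.TTheory GRing.Theory Num.Theory.
Local Open Scope ring_scope.

(* ind(A): smallest k with rank(A^k) = rank(A^(k+1)).  Such a k <= n always
   exists, so searching in 0..n gives exactly the smallest one. *)
Definition ind (R : fieldType) (n : nat) (A : 'M[R]_n) : nat :=
  find (fun k => \rank (A ^+ k) == \rank (A ^+ k.+1)) (iota 0 n.+1).

Definition is_inner_inverse (R : fieldType) (n : nat) (A X : 'M[R]_n) : Prop :=
  A *m X *m A = A.

Definition is_GDrazin_inverse (R : fieldType) (n : nat) (A X : 'M[R]_n) : Prop :=
  let k := ind A in
  [/\ A *m X *m A = A, X *m A ^+ k.+1 = A ^+ k & A ^+ k.+1 *m X = A ^+ k].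

Definition in_range (R : fieldType) (n : nat) (M : 'M[R]_n) (v : 'cV[R]_n) : Prop :=
  exists w : 'cV[R]_n, v = M *m w.
Definition in_null (R : fieldType) (n : nat) (M : 'M[R]_n) (v : 'cV[R]_n) : Prop :=
  M *m v = 0.

Definition range_sub (R : fieldType) (n : nat) (X Y : 'M[R]_n) : Prop :=
  forall v, in_range X v -> in_range Y v.

Definition is_projector_onto_along (R : fieldType) (n : nat) (P : 'M[R]_n)
  (S T : 'cV[R]_n -> Prop) : Prop :=
  [/\ P *m P = P,
      forall v, S v <-> in_range P v
    & forall v, T v <-> in_null P v].

From HB Require Import structures.
From mathcomp Require Import all_boot all_order all_algebra.
Import GRing.Theory Num.Theory.
Set Implicit Arguments. Unset Strict Implicit. Unset Printing Implicit Defensive.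
Local Open Scope ring_scope.

(* A projector is determined by its
   range and null space, so any [X] with [A X = P_{R(A), N(A G)}] satisfies
   [A X = A G]; if moreover [R(X) ⊆ R(Am A)], the idempotent [Am A] fixes [X],
   whence [X = Am A X = Am A G]. *)

Lemma eq_mx_cV (R : pzRingType) (m n : nat) (P Q : 'M[R]_(m, n)) :
  (forall v : 'cV[R]_n, P *m v = Q *m v) -> P = Q.
Proof.
move=> PQ; apply/matrixP => i j.
by have /matrixP/(_ i 0) := PQ (delta_mx j 0); rewrite -!colE !mxE.
Qed.

Lemma projector_onto_along_unique (R : fieldType) (n : nat) (P Q : 'M[R]_n)
    (S T : 'cV[R]_n -> Prop) :
  is_projector_onto_along P S T -> is_projector_onto_along Q S T -> P = Q.
Proof.
move=> [PP SP TP] [QQ SQ TQ]; apply: eq_mx_cV => v.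
have PQv : P *m (Q *m v) = Q *m v.
  have [w ->] : in_range P (Q *m v) by apply/SP/SQ; exists v.
  by rewrite mulmxA PP.
have : in_null P (v - Q *m v).
  by apply/TP/TQ; rewrite /in_null mulmxBr mulmxA QQ subrr.
by rewrite /in_null mulmxBr PQv => /subr0_eq.
Qed.

Section InnerInverse.

Variables (R : fieldType) (n : nat) (A G : 'M[R]_n).
Hypothesis AGA : is_inner_inverse A G.

Lemma inner_inverse_idem_l : (A *m G) *m (A *m G) = A *m G.
Proof. by rewrite mulmxA AGA. Qed.

Lemma inner_inverse_idem_r : (G *m A) *m (G *m A) = G *m A.
Proof. by rewrite -mulmxA (mulmxA A) AGA. Qed.

Lemma inner_inverse_projector :
  is_projector_onto_along (A *m G) (in_range A) (in_null (A *m G)).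
Proof.
split=> // [|v]; first exact: inner_inverse_idem_l.
split=> [[w ->]|[w ->]]; last by exists (G *m w); rewrite mulmxA.
by exists (A *m w); rewrite mulmxA AGA.
Qed.

End InnerInverse.

Lemma range_sub_mulmxr (R : fieldType) (n : nat) (M N : 'M[R]_n) :
  range_sub (M *m N) M.
Proof. by move=> _ [w ->]; exists (N *m w); rewrite mulmxA. Qed.

Lemma range_sub_idem_fix (R : fieldType) (n : nat) (P X : 'M[R]_n) :
  P *m P = P -> range_sub X P -> P *m X = X.
Proof.
move=> PP XP; apply: eq_mx_cV => v.
have [w Xv] : in_range P (X *m v) by apply: XP; exists v.
by rewrite -mulmxA Xv mulmxA PP.
Qed.

Lemma inner_inverse_product_characterization (R : fieldType) (n : nat)
    (A Am G : 'M[R]_n) :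
  is_inner_inverse A Am -> is_inner_inverse A G ->
  (is_projector_onto_along (A *m (Am *m A *m G)) (in_range A) (in_null (A *m G))
   /\ range_sub (Am *m A *m G) (Am *m A))
  /\ (forall X : 'M[R]_n,
        is_projector_onto_along (A *m X) (in_range A) (in_null (A *m G)) ->
        range_sub X (Am *m A) -> X = Am *m A *m G).
Proof.
move=> AAmA AGA.
have AX1 : A *m (Am *m A *m G) = A *m G by rewrite !mulmxA AAmA.
split.
  by rewrite AX1; split; [exact: inner_inverse_projector | exact: range_sub_mulmxr].
move=> X PX XAmA.
have AX : A *m X = A *m G.
  exact: projector_onto_along_unique PX (inner_inverse_projector AGA).
rewrite -(range_sub_idem_fix (inner_inverse_idem_r AAmA) XAmA).
by rewrite -mulmxA AX mulmxA.
Qed.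

Theorem theorem3p4 (C : numClosedFieldType) (n : nat) (A Am Agd : 'M[C]_n) :
  is_inner_inverse A Am -> is_GDrazin_inverse A Agd ->
  let X1GD := Am *m A *m Agd in
  (is_projector_onto_along (A *m X1GD) (in_range A) (in_null (A *m Agd))
   /\ range_sub X1GD (Am *m A))
  /\ (forall X : 'M[C]_n,
        is_projector_onto_along (A *m X) (in_range A) (in_null (A *m Agd)) ->
        range_sub X (Am *m A) -> X = X1GD).
Proof.
move=> AAmA [AAgdA _ _].
exact: inner_inverse_product_characterization.
Qed.
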